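(* If $X$ is a T$_D$ space in which every instance of the McKinsey scheme $\mathrm{M}:\ \Box\Diamond\varphi\to\Diamond\Box\varphi$ is $d$-valid, then $X$ is crowded and openly irresolvable.
   Context: $d$-semantics: a model on a space $X$ is a valuation of propositional variables by subsets of $X$; truth sets interpret Boolean connectives as set operations, $\Diamond\varphi$ as the derived set $\mathrm{d}_X$ (set of limit points: $x$ such that every $O-\{x\}$, $O$ an open neighbourhood of $x$, meets the set) of the truth set of $\varphi$, and $\Box=\neg\Diamond\neg$. A formula is $d$-valid in $X$ if true at every point in every model on $X$. $X$ is T$_D$ if $\mathrm{d}_X\{x\}$ is closed for all $x$; crowded if it has no isolated points. A space is irresolvable if it has no two disjoint non-empty dense subsets; $X$ is openly irresolvable if every non-empty open subspace is irresolvable. *)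

From mathcomp Require Import all_boot all_order.
From mathcomp Require Import boolp classical_sets topology.
Set Implicit Arguments. Unset Strict Implicit. Unset Printing Implicit Defensive.
Local Open Scope classical_set_scope.

Inductive form : Type :=
| Var : nat -> form
| Bot : form
| Neg : form -> form
| And : form -> form -> form
| Or  : form -> form -> form
| Imp : form -> form -> form
| Dia : form -> form.

Definition Box (f : form) : form := Neg (Dia (Neg f)).

Definition dset (T : topologicalType) (A : set T) : set T := limit_point A.

Fixpoint truth (T : topologicalType) (v : nat -> set T) (f : form) : set T :=
  match f with
  | Var n => v n
  | Bot => set0
  | Neg g => ~` truth v g
  | And g h => truth v g `&` truth v h
  | Or g h => truth v g `|` truth v h
  | Imp g h => ~` truth v g `|` truth v h
  | Dia g => dset (truth v g)
  end.

Definition d_valid (T : topologicalType) (f : form) : Prop :=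
  forall (v : nat -> set T) (x : T), truth v f x.

Definition McKinsey (f : form) : form := Imp (Box (Dia f)) (Dia (Box f)).

Definition TD_space (T : topologicalType) : Prop :=
  forall x : T, closed (dset [set x]).

Definition crowded (T : topologicalType) : Prop :=
  forall x : T, ~ open [set x].

Definition dense_in (T : topologicalType) (U A : set T) : Prop :=
  forall O : set T, open O -> O `&` U !=set0 -> O `&` A !=set0.

Definition irresolvable_in (T : topologicalType) (U : set T) : Prop :=
  ~ exists A B : set T,
      A `<=` U /\ B `<=` U /\ A `&` B = set0 /\ A !=set0 /\ B !=set0 /\
      dense_in U A /\ dense_in U B.

Definition openly_irresolvable (T : topologicalType) : Prop :=
  forall U : set T, open U -> U !=set0 -> irresolvable_in U.

From mathcomp Require Import all_boot all_order.
From mathcomp Require Import boolp classical_sets topology.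
Set Implicit Arguments. Unset Strict Implicit. Unset Printing Implicit Defensive.
Local Open Scope classical_set_scope.

(* The McKinsey formula fails at x as soon as, on a punctured neighbourhood of x,
   every point is a limit point both of the truth set of f and of its complement:
   then no point near x lies outside d(f), so x satisfies [Box (Dia f)], while no
   point near x satisfies [Box f], so x does not satisfy [Dia (Box f)].
   Crowdedness follows by taking an isolated point, where this is vacuous.
   In a crowded T_D space a set dense in an open U has every point of U as a limit
   point, because T_D lets us shrink any neighbourhood W of y so that W minus y is
   still open, and crowdedness keeps W minus y non-empty.  Two disjoint dense
   subsets A, B of U then make every point of U a limit point of A and of its
   complement, which refutes the McKinsey formula for the valuation A. *)

Section DerivedSet.
Variable T : topologicalType.
Implicit Types (A B U W : set T) (x y : T).

Lemma dsetS A B : A `<=` B -> dset A `<=` dset B.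
Proof. by move=> AB x xA N /xA[y [yx Ay Ny]]; exists y; split=> //; apply: AB. Qed.

Lemma dset1_irrefl y : ~ dset [set y] y.
Proof. by move=> /(_ setT filterT)[z [/eqP + /= zy _]]. Qed.

Lemma not_dsetC A U x :
  nbhs x U -> (forall y, U y -> y <> x -> A y) -> ~ dset (~` A) x.
Proof. by move=> xU UA /(_ U xU)[y [/eqP yx nAy Uy]]; apply/nAy/UA. Qed.

(* [closure [set y]] is [y] together with [dset [set y]], so removing y from an
   open set avoiding [dset [set y]] amounts to removing a closed set. *)
Lemma open_setD1 W y : open W -> W `&` dset [set y] = set0 -> open (W `\ y).
Proof.
move=> oW Wdy.
suff -> : W `\ y = W `&` ~` closure [set y].
  by apply: openI => //; apply/closed_openC/closed_closure.
apply/seteqP; split=> z [Wz zy]; split=> //.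
- rewrite closure_isolated_limit_point => -[/isolatedS //|dz].
  by have : (W `&` dset [set y]) z by []; rewrite Wdy.
- by move=> zy'; apply/zy; rewrite zy'; apply: subset_closure.
Qed.

Lemma TD_crowded_dense_dset U A :
  TD_space T -> crowded T -> open U -> dense_in U A -> U `<=` dset A.
Proof.
move=> TD cr oU dA y Uy N; rewrite nbhsE => -[B [oB By] BN].
set W := B `&` U `&` ~` dset [set y].
have oW : open W by apply: openI; [exact: openI | rewrite openC; exact: TD].
have oWy : open (W `\ y).
  by apply: open_setD1 => //; apply/seteqP; split=> z // [[_ ?]].
have [z [Wz zy]] : W `\ y !=set0.
  apply: contrapT => W1; apply: (cr y).
  suff <- : W = [set y] by [].
  apply/seteqP; split=> [z Wz | _ ->]; last by split; [split | exact: dset1_irrefl].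
  by apply: contrapT => zy; apply: W1; exists z.
have [w [[[[Bw _] _] /eqP wy] Aw]] : (W `\ y) `&` A !=set0.
  by apply: dA => //; exists z; split=> //; case: Wz => -[].
by exists w; split=> //; apply: BN.
Qed.

End DerivedSet.

Lemma McKinsey_fails (T : topologicalType) (v : nat -> set T) (f : form) (U : set T) (x : T) :
  nbhs x U ->
  (forall y, U y -> y <> x -> dset (truth v f) y /\ dset (~` truth v f) y) ->
  ~ truth v (McKinsey f) x.
Proof.
move=> xU Ud /= [BoxDia_fails | DiaBox].
- apply: BoxDia_fails => dx; apply: not_dsetC xU _ dx.
  by move=> y Uy yx; case: (Ud y Uy yx).
- apply: not_dsetC xU _ DiaBox.
  by move=> y Uy yx; case: (Ud y Uy yx).
Qed.

Lemma McKinsey_crowded (T : topologicalType) :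
  (forall f : form, d_valid T (McKinsey f)) -> crowded T.
Proof.
move=> hM x ox; apply: (@McKinsey_fails T (fun=> set0) (Var 0) [set x] x).
- exact: open_nbhs_nbhs.
- by move=> y ->.
- exact: hM.
Qed.

Theorem theorem10 (T : topologicalType) :
  TD_space T -> (forall f : form, d_valid T (McKinsey f)) ->
  crowded T /\ openly_irresolvable T.
Proof.
move=> TD hM; have cr := McKinsey_crowded hM; split=> //.
move=> U oU [x Ux] [A [B [_ [_ [AB [_ [_ [dA dB]]]]]]]].
have BnA : B `<=` ~` A by move=> y By Ay; have : (A `&` B) y by []; rewrite AB.
apply: (@McKinsey_fails T (fun=> A) (Var 0) U x); last exact: hM.
  exact: open_nbhs_nbhs.
move=> y Uy _; split; first exact: TD_crowded_dense_dset dA y Uy.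
exact/(dsetS BnA)/(TD_crowded_dense_dset TD cr oU dB).
Qed.
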